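(* Let $(\Gamma,\psi)$ be an $H$-asymptotic couple with asymptotic integration, and let $S$ be a nonempty convex subset of $\Gamma$ without a greatest element which has the yardstick property. Then $S$ is jammed if and only if $S^{\downarrow}=\Gamma^{<}$.
   Context: An asymptotic couple is a pair $(\Gamma,\psi)$ with $\Gamma$ an ordered abelian group and $\psi:\Gamma\setminus\{0\}\to\Gamma$ such that for all nonzero $\alpha,\beta$: $\alpha+\beta\ne0\Rightarrow\psi(\alpha+\beta)\ge\min(\psi(\alpha),\psi(\beta))$; $\psi(k\alpha)=\psi(\alpha)$ for $k\in\mathbb{Z}\setminus\{0\}$; $\alpha>0\Rightarrow\alpha+\psi(\alpha)>\psi(\beta)$. $H$-asymptotic: $0<\alpha\le\beta\Rightarrow\psi(\alpha)\ge\psi(\beta)$. Write $\gamma'=\gamma+\psi(\gamma)$. Asymptotic integration: every $\alpha\in\Gamma$ equals $\gamma'$ for some $\gamma\ne0$, necessarily unique, denoted $\int\alpha$. Contraction map: $\chi(\alpha)=\int\psi(\alpha)$ for $\alpha\ne0$, $\chi(0)=0$. Yardstick property of a nonempty convex $S$ without greatest element: there is $\beta\in S$ with $\gamma-\chi(\gamma)\in S$ for all $\gamma\in S$ with $\gamma>\beta$. $S^{\downarrow}=\{\delta\in\Gamma:\delta\le\sigma\text{ for some }\sigma\in S\}$, $\Gamma^{<}=\{\gamma\in\Gamma:\gamma<0\}$. A set $S\subseteq\Gamma$ is jammed if $S\ne\emptyset$, $S$ has no greatest element, and for every convex subgroup $\Delta\ne\{0\}$ of $\Gamma$ there is $\gamma_0\in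 S$ such that $\gamma_1-\gamma_0\in\Delta$ for every $\gamma_1\in S$ with $\gamma_1>\gamma_0$. *)

From HB Require Import structures.
From mathcomp Require Import all_boot all_order all_algebra.
From Stdlib Require Import ClassicalEpsilon.
Set Implicit Arguments. Unset Strict Implicit. Unset Printing Implicit Defensive.
Import Order.TTheory GRing.Theory Num.Theory.
Local Open Scope ring_scope.

Definition ordered_abelian_group (G : porderZmodType) : Prop :=
  (forall x y : G, (x <= y) || (y <= x)) /\
  (forall x y z : G, x <= y -> x + z <= y + z).

(* psi is a total function G -> G; only its values on G \ {0} matter. *)
Definition asymptotic_couple (G : porderZmodType) (psi : G -> G) : Prop :=
  [/\ forall a b : G, a != 0 -> b != 0 -> a + b != 0 ->
        Order.min (psi a) (psi b) <= psi (a + b),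
      forall (a : G) (k : int), a != 0 -> k != 0 -> psi (a *~ k) = psi a
    & forall a b : G, 0 < a -> b != 0 -> psi b < a + psi a].

Definition H_asymptotic (G : porderZmodType) (psi : G -> G) : Prop :=
  forall a b : G, 0 < a -> a <= b -> psi b <= psi a.

Definition deriv (G : porderZmodType) (psi : G -> G) (g : G) : G := g + psi g.

Definition has_asymptotic_integration (G : porderZmodType) (psi : G -> G) : Prop :=
  forall a : G, exists g : G, g != 0 /\ deriv psi g = a.

(* \int a : some nonzero g with g' = a (unique under the standing assumptions);
   defaults to 0 if no such g exists. *)
Definition integral (G : porderZmodType) (psi : G -> G) (a : G) : G :=
  match excluded_middle_informative (exists g : G, g != 0 /\ deriv psi g = a) with
  | left H => proj1_sig (constructive_indefinite_description _ H)
  | right _ => 0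
  end.

Definition chi (G : porderZmodType) (psi : G -> G) (a : G) : G :=
  if a == 0 then 0 else integral psi (psi a).

Definition convex (G : porderZmodType) (S : G -> Prop) : Prop :=
  forall a b c : G, S a -> S c -> a <= b -> b <= c -> S b.

Definition nonempty (G : porderZmodType) (S : G -> Prop) : Prop := exists s, S s.

Definition no_greatest (G : porderZmodType) (S : G -> Prop) : Prop :=
  forall s, S s -> exists t, S t /\ s < t.

Definition yardstick (G : porderZmodType) (psi : G -> G) (S : G -> Prop) : Prop :=
  exists b : G, S b /\ forall g : G, S g -> b < g -> S (g - chi psi g).

Definition convex_subgroup (G : porderZmodType) (D : G -> Prop) : Prop :=
  D 0 /\ (forall x y, D x -> D y -> D (x - y)) /\ convex D.

Definition jammed (G : porderZmodType) (S : G -> Prop) : Prop :=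
  nonempty S /\ no_greatest S /\
  forall D : G -> Prop, convex_subgroup D -> (exists d, D d /\ d != 0) ->
    exists g0, S g0 /\ forall g1, S g1 -> g0 < g1 -> D (g1 - g0).

Definition downset (G : porderZmodType) (S : G -> Prop) : G -> Prop :=
  fun d => exists s, S s /\ d <= s.

From mathcomp Require Import all_boot all_order all_algebra.
From Stdlib Require Import Classical ClassicalEpsilon.
Import Order.TTheory GRing.Theory Num.Theory.
Set Implicit Arguments. Unset Strict Implicit.
Unset Printing Implicit Defensive.
Local Open Scope ring_scope.

(* If S^down = Γ^<, then S gets within any e > 0 of 0 from below, so beyond
   some s in S all differences g - s lie in [0, e], hence in every nontrivial
   convex subgroup.
   Conversely, let S be jammed.  If S met Γ^>=, or stayed below some d < 0,
   then for a fixed p ≠ 0 (a positive element of S, resp. d) all large g in S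
   would satisfy g ≠ 0 and ψ(g) <= ψ(p).  This is impossible: the sets
   {0} ∪ {x : ψ(x) > C} are convex subgroups, and for C = ψ(χ(p)) jammedness
   yields g0 in S such that for large g in S both g - g0 and (g - χ(g)) - g0
   lie in it (g - χ(g) is in S by the yardstick property), hence so does χ(g).
   But χ(g)' = ψ(g) <= ψ(p) = χ(p)' with χ(g), χ(p) < 0 forces χ(g) <= χ(p),
   so ψ(χ(g)) <= C. *)

Section OrderedGroup.

Variable G : porderZmodType.
Hypothesis le_total_G : forall x y : G, (x <= y) || (y <= x).
Hypothesis lerD2r_G : forall x y z : G, x <= y -> x + z <= y + z.

Lemma ltNgeG (x y : G) : (x < y) = ~~ (y <= x).
Proof. exact/comparable_ltNge/le_total_G. Qed.

Lemma ltrD2rG (x y z : G) : x < y -> x + z < y + z.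
Proof.
by rewrite !lt_def (inj_eq (addIr z)) => /andP[-> /(lerD2r_G z)].
Qed.

Lemma lerN2G (x y : G) : x <= y -> - y <= - x.
Proof.
move=> /(lerD2r_G (- x - y)).
by rewrite addrA subrr add0r addrC subrK.
Qed.

Lemma ltrN2G (x y : G) : x < y -> - y < - x.
Proof.
by rewrite !lt_def (inj_eq (@oppr_inj _)) eq_sym => /andP[-> /lerN2G].
Qed.

Lemma oppr_gt0G (x : G) : x < 0 -> 0 < - x.
Proof. by move/ltrN2G; rewrite oppr0. Qed.

Lemma convex_subgroup_gt0 (D : G -> Prop) :
  convex_subgroup D -> (exists d, D d /\ d != 0) -> exists e, D e /\ 0 < e.
Proof.
move=> [D0 [DB _]] [d [Dd d_neq0]].
case/orP: (le_total_G d 0) => [d_le0 | d_ge0]; last first.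
  by exists d; rewrite lt_def d_neq0 d_ge0.
exists (0 - d); split; first exact: DB.
by rewrite sub0r oppr_gt0G // lt_def eq_sym d_neq0.
Qed.

Section Subsets.

Variable S : G -> Prop.
Hypothesis no_greatest_S : no_greatest S.

Lemma no_greatest_gt2 (x y : G) : S x -> S y -> exists g, [/\ S g, x < g & y < g].
Proof.
move=> Sx Sy; case/orP: (le_total_G x y) => [xy | yx].
  have [g [Sg yg]] := no_greatest_S Sy.
  by exists g; split=> //; apply: le_lt_trans yg.
have [g [Sg xg]] := no_greatest_S Sx.
by exists g; split=> //; apply: le_lt_trans xg.
Qed.

Lemma downset_lt0_jammed :
  nonempty S -> (forall d, downset S d <-> d < 0) -> jammed S.
Proof.
move=> neS downS; split=> //; split=> // D subD /(convex_subgroup_gt0 subD).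
move=> [e [De e_gt0]]; have [D0 [_ convD]] := subD.
have [s [Ss e_le_s]] : downset S (- e).
  by apply/downS; rewrite -oppr0 ltrN2G.
exists s; split=> // g Sg sg.
have g_lt0 : g < 0 by apply/downS; exists g.
apply: (convD 0 _ e) => //.
  by rewrite -(subrr s); exact/lerD2r_G/ltW.
apply: le_trans (lerD2r_G (- s) (ltW g_lt0)) _.
by rewrite sub0r -[e]opprK lerN2G.
Qed.

End Subsets.

Section AsymptoticCouple.

Variable psi : G -> G.
Hypothesis couple_psi : asymptotic_couple psi.
Hypothesis H_asymptotic_psi : H_asymptotic psi.
Hypothesis integration_psi : has_asymptotic_integration psi.

Lemma psiN (x : G) : x != 0 -> psi (- x) = psi x.
Proof. by case: couple_psi => _ psiZ _ x_neq0; rewrite -mulrN1z psiZ. Qed.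

Lemma psi_le_lt0 (a b : G) : a <= b -> b < 0 -> psi a <= psi b.
Proof.
move=> ab b_lt0; have a_lt0 := le_lt_trans ab b_lt0.
rewrite -psiN ?lt_eqF // -[psi b]psiN ?lt_eqF //.
by apply: H_asymptotic_psi; [exact: oppr_gt0G | exact: lerN2G].
Qed.

Lemma deriv_le_lt0 (a b : G) :
  a < 0 -> b < 0 -> deriv psi a <= deriv psi b -> a <= b.
Proof.
move=> a_lt0 b_lt0 dab; apply: contraT; rewrite -ltNgeG => ba.
have psi_ba := psi_le_lt0 (ltW ba) a_lt0.
have lt_ab : deriv psi b < a + psi b := ltrD2rG (psi b) ba.
have le_ab : a + psi b <= deriv psi a by rewrite /deriv ![a + _]addrC lerD2r_G.
by move: (lt_le_trans (lt_le_trans lt_ab le_ab) dab); rewrite ltxx.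
Qed.

Lemma chi_spec (x : G) :
  x != 0 -> chi psi x != 0 /\ deriv psi (chi psi x) = psi x.
Proof.
rewrite /chi /integral => /negbTE ->.
case: excluded_middle_informative => [ex | no_int]; last first.
  by case: no_int; apply: integration_psi.
by case: constructive_indefinite_description.
Qed.

Lemma chi_lt0 (x : G) : x != 0 -> chi psi x < 0.
Proof.
move=> x_neq0; have [chi_neq0 d_chi] := chi_spec x_neq0.
rewrite ltNgeG; apply/negP => chi_ge0.
have chi_gt0 : 0 < chi psi x by rewrite lt_def chi_neq0.
case: couple_psi => _ _ /(_ _ _ chi_gt0 x_neq0).
by rewrite -[_ + _]/(deriv psi _) d_chi ltxx.
Qed.

Lemma psi_gt_convex_subgroup (C : G) :
  convex_subgroup (fun x => x = 0 \/ C < psi x).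
Proof.
pose D x := x = 0 \/ C < psi x.
have DN x : D x -> D (- x).
  have [-> | x_neq0] := eqVneq x 0; first by rewrite oppr0; left.
  by case=> [/eqP | ]; [rewrite (negbTE x_neq0) | right; rewrite psiN].
have DD x y : D x -> D y -> D (x + y).
  have [-> | x_neq0] := eqVneq x 0; first by rewrite add0r.
  have [-> | y_neq0] := eqVneq y 0; first by rewrite addr0.
  have [-> | xy_neq0] := eqVneq (x + y) 0; first by left.
  case=> [/eqP | Cx]; first by rewrite (negbTE x_neq0).
  case=> [/eqP | Cy]; first by rewrite (negbTE y_neq0).
  case: couple_psi => /(_ x y x_neq0 y_neq0 xy_neq0) psi_min _ _; right.
  by move: psi_min; rewrite /Order.min; case: ifP => _; apply: lt_le_trans.
split; first by left.
split; first by move=> x y Dx /DN; apply: DD.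
move=> a b c Da Dc ab bc.
have [-> | b_neq0] := eqVneq b 0; first by left.
case/orP: (le_total_G b 0) => [b_le0 | b_ge0].
  have b_lt0 : b < 0 by rewrite lt_def eq_sym b_neq0.
  case: Da => [a0 | Ca]; first by move: (le_lt_trans ab b_lt0); rewrite a0 ltxx.
  by right; apply: lt_le_trans Ca (psi_le_lt0 ab b_lt0).
have b_gt0 : 0 < b by rewrite lt_def b_neq0.
case: Dc => [c0 | Cc]; first by move: (lt_le_trans b_gt0 bc); rewrite c0 ltxx.
by right; apply: lt_le_trans Cc (H_asymptotic_psi b_gt0 bc).
Qed.

Section Yardstick.

Variable S : G -> Prop.
Hypothesis no_greatest_S : no_greatest S.
Hypothesis yardstick_S : yardstick psi S.

Lemma psi_bounded_not_jammed (p m : G) : p != 0 -> S m ->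
  (forall g, S g -> m < g -> g != 0 /\ psi g <= psi p) -> ~ jammed S.
Proof.
move=> p_neq0 Sm bound [_ [_ jamS]].
have [b [Sb yardS]] := yardstick_S.
pose D x := x = 0 \/ psi (chi psi p) < psi x.
have subD : convex_subgroup D := psi_gt_convex_subgroup _.
have [_ [D_sub _]] := subD.
have [chip_neq0 d_chip] := chi_spec p_neq0.
have [g0 [Sg0 jam_g0]] : exists g0, S g0 /\ forall g, S g -> g0 < g -> D (g - g0).
  apply: jamS subD _; exists (chi psi (chi psi p)).
  have [chi2_neq0 d_chi2] := chi_spec chip_neq0.
  split=> //; right; rewrite -d_chi2 -[X in _ < X]add0r.
  exact/ltrD2rG/chi_lt0.
have [g1 [Sg1 g0g1 bg1]] := no_greatest_gt2 no_greatest_S Sg0 Sb.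
have [g [Sg g1g mg]] := no_greatest_gt2 no_greatest_S Sg1 Sm.
have [g_neq0 psi_g] := bound g Sg mg.
have [chig_neq0 d_chig] := chi_spec g_neq0.
have chig_lt0 := chi_lt0 g_neq0.
have D_chig : D (chi psi g).
  have g_lt : g < g - chi psi g.
    by have := ltrD2rG g (oppr_gt0G chig_lt0); rewrite add0r addrC.
  have g0g := lt_trans g0g1 g1g.
  have := D_sub _ _ (jam_g0 _ Sg g0g)
    (jam_g0 _ (yardS _ Sg (lt_trans bg1 g1g)) (lt_trans g0g g_lt)).
  by rewrite opprB addrA subrK opprB addrC subrK.
have chig_le : chi psi g <= chi psi p.
  by apply: deriv_le_lt0 chig_lt0 (chi_lt0 p_neq0) _; rewrite d_chig d_chip.
case: D_chig => [chig0 | lt_chi]; first by move: chig_neq0; rewrite chig0 eqxx.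
by move: (lt_le_trans lt_chi (psi_le_lt0 chig_le (chi_lt0 p_neq0))); rewrite ltxx.
Qed.

Lemma jammed_lt0 (s : G) : jammed S -> S s -> s < 0.
Proof.
move=> jamS Ss; rewrite ltNgeG; apply/negP => s_ge0.
have [t [St st]] := no_greatest_S Ss.
have t_gt0 := le_lt_trans s_ge0 st.
apply: (psi_bounded_not_jammed (p := t) (m := t)) jamS => //; first by rewrite gt_eqF.
move=> g Sg tg; split; first by rewrite gt_eqF // (lt_trans t_gt0 tg).
exact: H_asymptotic_psi (ltW tg).
Qed.

Lemma jammed_downset (d : G) : nonempty S -> jammed S -> d < 0 -> downset S d.
Proof.
move=> [m Sm] jamS d_lt0; apply: NNPP => not_down.
apply: (psi_bounded_not_jammed (p := d) (m := m)) jamS => //; first by rewrite lt_eqF.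
move=> g Sg _.
have gd : g < d by rewrite ltNgeG; apply/negP => dg; apply: not_down; exists g.
split; first by rewrite lt_eqF // (lt_trans gd d_lt0).
exact: psi_le_lt0 (ltW gd) d_lt0.
Qed.

End Yardstick.

End AsymptoticCouple.

End OrderedGroup.

Theorem lemma3p17 (G : porderZmodType) (psi : G -> G) (S : G -> Prop) :
  ordered_abelian_group G ->
  asymptotic_couple psi -> H_asymptotic psi -> has_asymptotic_integration psi ->
  nonempty S -> convex S -> no_greatest S -> yardstick psi S ->
  (jammed S <-> (forall d : G, downset S d <-> d < 0)).
Proof.
move=> [le_total lerD2r] couple H_asym integr neS _ ngS yardS.
have lt0 := jammed_lt0 le_total lerD2r couple H_asym integr ngS yardS.
have cofinal := jammed_downset le_total lerD2r couple H_asym integr ngS yardS.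
split=> [jamS d | downS]; first split=> [[s [Ss ds]] | d_lt0].
- exact: le_lt_trans ds (lt0 s jamS Ss).
- exact: cofinal d neS jamS d_lt0.
- exact: (downset_lt0_jammed le_total lerD2r ngS neS downS).
Qed.
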